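(* In $H_\ast M\xi=\mathbb{Z}\langle Z_1,Z_2,\ldots\rangle$ with the filtration $F_k$ by polynomial degree in the $Z_i$: (1) for $a\in F_k$ and $l>0$ one has $\phi_l(a)\equiv[Z_l,a]\bmod F_{k+2}$; (2) $\Upsilon_{p,q}\equiv[Z_p,Z_q]\bmod F_3$ for all $p,q$.
   Context: $M\xi$ is the Baker–Richter spectrum (Thom spectrum of $\Omega\Sigma\mathbb{C}P^\infty\to BU$), complex oriented with orientation $x$. $H=H\mathbb{Z}$. $H_\ast M\xi\cong H_\ast\Omega\Sigma\mathbb{C}P^\infty=\mathbb{Z}\langle Z_1,Z_2,\ldots\rangle$ is free associative, $Z_k$ the image of the generator of $H_{2k}\mathbb{C}P^\infty$, $Z_0=1$. The Hurewicz map $M\xi^\ast(\mathbb{C}P^\infty)^n\to H_\ast M\xi\otimes\mathbb{Z}[[T_1,\ldots,T_n]]$ (with $T_j$ central) is an injective ring map sending $x_j\mapsto\sum_{k\ge0}Z_kT_j^{1+k}$; in particular $M\xi_\ast\subset H_\ast M\xi$. For $a\in H_\ast M\xi$ define $\phi_k(a)\in H_\ast M\xi$ recursively by the identity $\sum_{j\ge0}(Z_ja)T^{1+j}=\sum_{k\ge0}\phi_k(a)\big(\sum_{j\ge0}Z_jT^{1+j}\big)^{1+k}$; on $M\xi_\ast$ these agree with the operators defined by $xa=\sum_k\phi_k(a)x^{1+k}$ in $M\xi^\ast[[x]]$. $\Upsilon_{p,q}\in M\xi_\ast\subset H_\ast M\xi$ are defined by $yx=\sum_{p,q\ge0}\Upsilon_{p,q}x^{1+p}y^{1+q}$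 in $M\xi^\ast(\mathbb{C}P^\infty\times\mathbb{C}P^\infty)$. $F_k$ is the span of monomials $Z_{i_1}\cdots Z_{i_m}$ (with all $i_j\ge1$) of length $m\ge k$. *)

From mathcomp Require Import all_boot all_order all_algebra.
Set Implicit Arguments. Unset Strict Implicit. Unset Printing Implicit Defensive.
Import Order.TTheory GRing.Theory Num.Theory.
Local Open Scope ring_scope.

(* A word [:: i1; ...; im] stands for the monomial Z_{i1} ... Z_{im}.
   An element is its coefficient function on words (a formal noncommutative
   power series over Z); H_* Mxi is the subset of finitely supported ones on
   words with all letters >= 1 (see [inH]). *)
Definition ncs := seq nat -> int.

Definition ncadd (a b : ncs) : ncs := fun w => a w + b w.
Definition ncsub (a b : ncs) : ncs := fun w => a w - b w.
Definition ncmul (a b : ncs) : ncs :=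
  fun w => \sum_(i < (size w).+1) a (take i w) * b (drop i w).
Definition ncsum (n : nat) (F : nat -> ncs) : ncs := fun w => \sum_(i < n) F i w.
Definition comm (a b : ncs) : ncs := ncsub (ncmul a b) (ncmul b a).

(* the generator Z_j, with the convention Z_0 = 1 *)
Definition Zg (j : nat) : ncs :=
  fun w => if j == 0%N then (if w == [::] then 1 else 0)
           else (if w == [:: j] then 1 else 0).

(* pw k n = coefficient of T^(n+1) in x^(1+k), where x = sum_j Z_j T^(1+j)
   (T central). *)
Fixpoint pw (k n : nat) : ncs :=
  match k with
  | 0 => Zg n
  | k'.+1 => ncsum n (fun i => ncmul (pw k' i) (Zg (n - i - 1)))
  end.

Definition inH (a : ncs) : Prop :=
  (exists s : seq (seq nat), forall w, a w != 0 -> w \in s) /\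
  (forall w, a w != 0 -> all (fun i => 0 < i)%N w).

Definition inF (k : nat) (a : ncs) : Prop :=
  inH a /\ (forall w, a w != 0 -> (k <= size w)%N).

Definition congF (k : nat) (b c : ncs) : Prop := inF k (ncsub b c).

(* phi is the family (phi_k(a))_k defined by
   sum_j (Z_j a) T^(1+j) = sum_k phi_k(a) (sum_j Z_j T^(1+j))^(1+k),
   i.e. coefficientwise in T^(n+1). *)
Definition is_phi (a : ncs) (phi : nat -> ncs) : Prop :=
  forall n, ncmul (Zg n) a = ncsum n.+1 (fun k => ncmul (phi k) (pw k n)).

(* Ups is the family Upsilon_{p,q} defined by y x = sum Ups_{p,q} x^(1+p) y^(1+q),
   read through the Hurewicz image x |-> sum Z_k S^(1+k), y |-> sum Z_k T^(1+k)
   (S, T central), coefficientwise in S^(1+m) T^(1+n). *)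
Definition is_Ups (Ups : nat -> nat -> ncs) : Prop :=
  forall m n, ncmul (Zg n) (Zg m) =
    ncsum m.+1 (fun p => ncsum n.+1 (fun q =>
      ncmul (ncmul (Ups p q) (pw p m)) (pw q n))).

From mathcomp Require Import all_boot all_order all_algebra zify ring.
From Stdlib Require Import FunctionalExtensionality.
Set Implicit Arguments. Unset Strict Implicit. Unset Printing Implicit Defensive.
Import Order.TTheory GRing.Theory Num.Theory.
Local Open Scope ring_scope.

(* Both congruences come from reading off one coefficient of the defining
   identity and splitting off its two extreme terms.  For (1), the coefficient
   of T^(1+l) in sum_j Z_j a T^(1+j) = sum_i phi_i(a) x^(1+i) reads
     Z_l a = a Z_l + phi_l(a) + sum_(0<i<l) phi_i(a) [T^(1+l)] x^(1+i),
   since phi_0(a) = a and [T^(1+l)] x^(1+l) = 1.  For 0 < i < l, induction on l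
   gives phi_i(a) = [Z_i, a] mod F_(k+2), so phi_i(a) lies in F_(k+1), while
   [T^(1+l)] x^(1+i) lies in F_1; hence the remainder lies in F_(k+2).
   (2) is the same argument for the coefficient of S^(1+m) T^(1+n), by
   induction on m + n, using Upsilon_(0,0) = 1. *)

Lemma sumr_neq0_exists (R : nmodType) (I : finType) (F : I -> R) :
  \sum_i F i != 0 -> exists i, F i != 0.
Proof.
have [i Fi | allF0] := pickP (fun i => F i != 0); first by exists i.
by rewrite big1 ?eqxx // => i _; apply/eqP/negbFE/allF0.
Qed.

Lemma bigD2 (R : nmodType) (I : finType) (i0 i1 : I) (F : I -> R) : i0 != i1 ->
  \sum_i F i = F i0 + F i1 + \sum_(i | (i != i0) && (i != i1)) F i.
Proof. by move=> ne01; rewrite (bigD1 i0) // (bigD1 i1) 1?eq_sym //= addrA. Qed.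

Definition ncs0 : ncs := fun _ => 0.

Lemma ncmul_neq0 a b w : ncmul a b w != 0 ->
  exists i, a (take i w) != 0 /\ b (drop i w) != 0.
Proof.
by move=> /sumr_neq0_exists [i]; rewrite mulf_eq0 negb_or => /andP []; exists i.
Qed.

Lemma sum_ncsE (I : Type) (r : seq I) (P : pred I) (F : I -> ncs) :
  (fun w => \sum_(i <- r | P i) F i w) = \big[ncadd/ncs0]_(i <- r | P i) F i.
Proof.
apply: functional_extensionality => w.
by apply: (big_rec2 (fun x (y : ncs) => x = y w)) => // i x y _ ->.
Qed.

Lemma ncsub_diag a : ncsub a a = ncs0.
Proof. by apply: functional_extensionality => w; rewrite /ncsub subrr. Qed.

Lemma ncsum1 (F : nat -> ncs) : ncsum 1 F = F 0%N.
Proof. by apply: functional_extensionality => w; rewrite /ncsum big_ord1. Qed.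

Lemma ncmul1l a : ncmul (Zg 0) a = a.
Proof.
apply: functional_extensionality => w.
rewrite /ncmul big_ord_recl /Zg /= take0 drop0 mul1r big1 ?addr0 // => i _.
rewrite -size_eq0 size_take /bump /= add1n.
by case: ltnP => _; rewrite ?(gtn_eqF (leq_ltn_trans (leq0n i) (ltn_ord i))) mul0r.
Qed.

Lemma ncmul1r a : ncmul a (Zg 0) = a.
Proof.
apply: functional_extensionality => w.
rewrite /ncmul big_ord_recr /Zg /= take_size drop_size eqxx mulr1 big1 ?add0r //.
by move=> i _; rewrite -size_eq0 size_drop subn_eq0 leqNgt ltn_ord mulr0.
Qed.

Lemma Zg_weight j w : Zg j w != 0 -> sumn w = j.
Proof.
rewrite /Zg; have [->|_] := eqVneq j 0%N; first by have [->|] := eqVneq w [::].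
by have [->|] := eqVneq w [:: j]; rewrite //= addn0.
Qed.

Lemma pw_weight k n w : pw k n w != 0 -> (sumn w + k = n)%N.
Proof.
elim: k n w => [|k IHk] n w /=; first by rewrite addn0 => /Zg_weight.
move=> /sumr_neq0_exists [i /ncmul_neq0 [j [/IHk wt1 /Zg_weight wt2]]].
by rewrite -(cat_take_drop j w) sumn_cat; move: (ltn_ord i); lia.
Qed.

Lemma pw_small k n : (n < k)%N -> pw k n = ncs0.
Proof.
move=> ltnk; apply: functional_extensionality => w.
by apply/eqP; apply: contraT => /pw_weight; lia.
Qed.

Lemma pw_diag n : pw n n = Zg 0.
Proof.
elim: n => [|n IHn] //=.
apply: functional_extensionality => w.
rewrite /ncsum big_ord_recr /= subSnn subnn IHn ncmul1r big1 ?add0r // => i _.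
by rewrite pw_small // /ncmul big1 // => j _; rewrite mul0r.
Qed.

Lemma inF0 k : inF k ncs0.
Proof. by do 2?split; first exists [::]; move=> w; rewrite eqxx. Qed.

Lemma inF_le j k a : (j <= k)%N -> inF k a -> inF j a.
Proof. by move=> lejk [Ha Fa]; split=> // w /Fa; apply: leq_trans. Qed.

Lemma inF_support2 k a b c :
  (forall w, c w != 0 -> a w != 0 \/ b w != 0) ->
  inF k a -> inF k b -> inF k c.
Proof.
move=> supp [[[sa Sa] Pa] Ka] [[[sb Sb] Pb] Kb]; do 2?split.
- by exists (sa ++ sb) => w /supp [/Sa|/Sb]; rewrite mem_cat => ->; rewrite ?orbT.
- by move=> w /supp [/Pa|/Pb].
- by move=> w /supp [/Ka|/Kb].
Qed.

Lemma inF_add k a b : inF k a -> inF k b -> inF k (ncadd a b).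
Proof.
apply: inF_support2 => w; rewrite /ncadd.
by case: (eqVneq (a w) 0) => [->|]; [rewrite add0r; right | left].
Qed.

Lemma inF_sub k a b : inF k a -> inF k b -> inF k (ncsub a b).
Proof.
apply: inF_support2 => w; rewrite /ncsub.
by case: (eqVneq (a w) 0) => [->|]; [rewrite sub0r oppr_eq0; right | left].
Qed.

Lemma inF_mul i j a b : inF i a -> inF j b -> inF (i + j) (ncmul a b).
Proof.
move=> [[[sa Sa] Pa] Ka] [[[sb Sb] Pb] Kb]; do 2?split.
- exists [seq u ++ v | u <- sa, v <- sb] => w /ncmul_neq0 [n [/Sa wa /Sb wb]].
  by rewrite -(cat_take_drop n w); apply: allpairs_f.
- move=> w /ncmul_neq0 [n [/Pa wa /Pb wb]].
  by rewrite -(cat_take_drop n w) all_cat wa wb.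
- move=> w /ncmul_neq0 [n [/Ka wa /Kb wb]].
  by rewrite -(cat_take_drop n w) size_cat leq_add.
Qed.

Lemma inF_comm i j a b : inF i a -> inF j b -> inF (i + j) (comm a b).
Proof.
by move=> Fa Fb; apply: inF_sub; [|rewrite addnC]; apply: inF_mul.
Qed.

Lemma inF_big k (I : Type) (r : seq I) (P : pred I) (F : I -> ncs) :
  (forall i, P i -> inF k (F i)) -> inF k (fun w => \sum_(i <- r | P i) F i w).
Proof. by rewrite sum_ncsE; apply: big_ind; [apply: inF0 | apply: inF_add]. Qed.

Lemma inF_Zg j : inF 0 (Zg j).
Proof.
split=> //; split=> [|w].
  exists [:: [::]; [:: j]] => w; rewrite /Zg; case: (j == 0%N).
    by have [->|] := eqVneq w [::]; rewrite ?inE ?eqxx.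
  by have [->|] := eqVneq w [:: j]; rewrite ?inE ?eqxx ?orbT.
rewrite /Zg; have [_|j_neq0] := eqVneq j 0%N; first by have [->|] := eqVneq w [::].
by have [->_|//] := eqVneq w [:: j]; rewrite /= andbT lt0n.
Qed.

Lemma inF_Zg_pos j : (0 < j)%N -> inF 1 (Zg j).
Proof.
move=> j_gt0; have [Hj _] := inF_Zg j; split=> // w.
by rewrite /Zg gtn_eqF //; have [->|] := eqVneq w [:: j].
Qed.

Lemma inF_pw k n : inF 0 (pw k n).
Proof.
elim: k n => [|k IHk] n /=; first exact: inF_Zg.
by apply: inF_big => i _; apply: (inF_mul (IHk i) (inF_Zg _)).
Qed.

Lemma inF_pw_lt k n : (k < n)%N -> inF 1 (pw k n).
Proof.
move=> ltkn; have [Hpw _] := inF_pw k n; split=> // w /pw_weight.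
by case: w => [|x w] /=; lia.
Qed.

Lemma congF_addr k b r : inF k r -> congF k b (ncadd b r).
Proof.
apply: inF_support2 (inF0 k) => w; rewrite /ncsub /ncadd opprD addrA subrr sub0r.
by rewrite oppr_eq0; right.
Qed.

Lemma inF_congF j k b c : (j <= k)%N -> congF k b c -> inF j c -> inF j b.
Proof.
move=> lejk /(inF_le lejk); apply: inF_support2 => w; rewrite /ncsub.
by case: (eqVneq (c w) 0) => [->|]; [rewrite subr0; left | right].
Qed.

Section Phi.

Variables (k : nat) (a : ncs) (phi : nat -> ncs).
Hypotheses (Fa : inF k a) (phiP : is_phi a phi).

Lemma phi0 : phi 0%N = a.
Proof. by have := phiP 0; rewrite ncsum1 ncmul1l pw_diag ncmul1r. Qed.

Lemma comm_Zg_phi l : (0 < l)%N ->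
  comm (Zg l) a = ncadd (phi l)
    (fun w => \sum_(i < l.+1 | (i != ord0) && (i != ord_max))
                ncmul (phi i) (pw i l) w).
Proof.
move=> l_gt0; apply: functional_extensionality => w.
have := congr1 (fun f => f w) (phiP l).
rewrite /ncsum (@bigD2 _ _ ord0 ord_max); last first.
  by rewrite -val_eqE /= eq_sym -lt0n.
by rewrite /= phi0 pw_diag ncmul1r /comm /ncsub /ncadd => ->; ring.
Qed.

Lemma phi_congF l : (0 < l)%N -> congF (k + 2) (phi l) (comm (Zg l) a).
Proof.
elim/ltn_ind: l => l IHl l_gt0; rewrite comm_Zg_phi //.
apply/congF_addr/inF_big => i /andP [i_gt0 i_ltl].
rewrite -val_eqE /= -lt0n in i_gt0; rewrite -val_eqE /= in i_ltl.
have {}i_ltl : (i < l)%N by rewrite ltn_neqAle i_ltl -ltnS ltn_ord.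
have Fphi : inF (k + 1) (phi i).
  apply: inF_congF (IHl _ i_ltl i_gt0) _; first by rewrite leq_add2l.
  by rewrite addnC; apply: inF_comm (inF_Zg_pos i_gt0) Fa.
by rewrite -[2%N]/(1 + 1)%N addnA; apply: inF_mul Fphi (inF_pw_lt i_ltl).
Qed.

End Phi.

Section Upsilon.

Variable Ups : nat -> nat -> ncs.
Hypothesis UpsP : is_Ups Ups.

Lemma Ups00 : Ups 0%N 0%N = Zg 0.
Proof.
by have := UpsP 0 0; rewrite !ncsum1 pw_diag !ncmul1r => ->.
Qed.

Lemma comm_Zg_Ups m n : (m, n) <> (0%N, 0%N) ->
  comm (Zg n) (Zg m) = ncadd (Ups m n)
    (fun w => \sum_(pq : 'I_m.+1 * 'I_n.+1 |
                      (pq != (ord0, ord0)) && (pq != (ord_max, ord_max)))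
                ncmul (ncmul (Ups pq.1 pq.2) (pw pq.1 m)) (pw pq.2 n) w).
Proof.
move=> mn_neq0; apply: functional_extensionality => w.
have := congr1 (fun f => f w) (UpsP m n).
rewrite /ncsum pair_bigA (@bigD2 _ _ (ord0, ord0) (ord_max, ord_max)).
  by rewrite /= Ups00 !pw_diag ncmul1l !ncmul1r /comm /ncsub /ncadd => ->; ring.
by apply: contra_notN mn_neq0; rewrite xpair_eqE -!val_eqE /= => /andP [/eqP <- /eqP <-].
Qed.

Lemma inF_comm_Zg p q : inF 2 (comm (Zg q) (Zg p)).
Proof.
have [->|p_gt0] := posnP p; last have [->|q_gt0] := posnP q;
  try by rewrite /comm ncmul1l ncmul1r ncsub_diag; apply: inF0.
exact: inF_comm (inF_Zg_pos q_gt0) (inF_Zg_pos p_gt0).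
Qed.

Lemma Ups_congF m n : (m, n) <> (0%N, 0%N) ->
  congF 3 (Ups m n) (comm (Zg n) (Zg m)).
Proof.
have [s] := ubnP (m + n); elim: s m n => // s IHs m n mn_lt_s mn_neq0.
rewrite comm_Zg_Ups //.
apply/congF_addr/inF_big => -[p q]; rewrite !xpair_eqE -!val_eqE /=.
move=> /andP [pq_neq0 pq_neqmn].
have FUps : inF 2 (Ups p q).
  apply: inF_congF (IHs p q _ _) (inF_comm_Zg p q) => //.
    move: pq_neqmn (ltn_ord p) (ltn_ord q) mn_lt_s.
    by rewrite negb_and => /orP [] /eqP; lia.
  by case=> p0 q0; rewrite p0 q0 in pq_neq0.
move: pq_neqmn; rewrite negb_and => /orP [p_neqm | q_neqn].
  have p_ltm : (p < m)%N by rewrite ltn_neqAle p_neqm -ltnS ltn_ord.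
  exact: inF_mul (inF_mul FUps (inF_pw_lt p_ltm)) (inF_pw _ _).
have q_ltn : (q < n)%N by rewrite ltn_neqAle q_neqn -ltnS ltn_ord.
exact: inF_mul (inF_mul FUps (inF_pw _ _)) (inF_pw_lt q_ltn).
Qed.

End Upsilon.

Theorem mainTheorem13 :
  (forall (k : nat) (a : ncs) (phi : nat -> ncs),
      inF k a -> is_phi a phi ->
      forall l : nat, (0 < l)%N -> congF (k + 2) (phi l) (comm (Zg l) a))
  /\
  (forall Ups : nat -> nat -> ncs, is_Ups Ups ->
      forall p q : nat, (p, q) <> (0%N, 0%N) ->
      congF 3 (Ups p q) (comm (Zg q) (Zg p))).
Proof.
split; first exact: phi_congF.
exact: Ups_congF.
Qed.
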